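(* Let $G$ be a finite simple undirected graph, $T$ a spanning forest of $G$, and let $G'=G+e$ be obtained by inserting a new edge $e$ between two distinct non-adjacent vertices; let $T'=T$ if the endpoints of $e$ lie in the same tree of $T$, and $T'=T+e$ otherwise (so $T'$ is a spanning forest of $G'$). Let $(u,v)$ be an edge of $T$, and let $\mathrm{rep}(u,v)$ and $\mathrm{rep}'(u,v)$ denote the number of replacement edges of $(u,v)$ with respect to $(G,T)$ and $(G',T')$, respectively. Then $u$ and $v$ lie in different 2-edge-connected components of $G$ but in the same 2-edge-connected component of $G'$ if and only if $\mathrm{rep}(u,v)=0$ and $\mathrm{rep}'(u,v)=1$.
   Context: A spanning forest of a graph $H$ is an acyclic subgraph on all vertices of $H$ whose components have the same vertex sets as the components of $H$. Given $H$ and a spanning forest $F$, a replacement edge for an edge $f$ of $F$ is an edge $(x,y)\in E(H)\setminus E(F)$ with $x,y$ in the same tree of $F$ such that the unique path in $F$ between $x$ and $y$ contains $f$. Two vertices are 2-edge connected if there exist at least two edge-disjoint paths between them; the 2-edge-connected components are the equivalence classes of this relation. *)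

From mathcomp Require Import all_boot.
From mathcomp Require Import boolp.
Set Implicit Arguments. Unset Strict Implicit. Unset Printing Implicit Defensive.

Section Graphs.
Variable V : finType.

Definition simple_graph (G : rel V) := symmetric G /\ irreflexive G.

Definition uses_edge (x : V) (p : seq V) (a b : V) : bool :=
  ((a, b) \in zip (x :: p) p) || ((b, a) \in zip (x :: p) p).

Definition acyclic (F : rel V) := forall c : seq V, 3 <= size c -> ~~ ucycleb F c.

Definition spanning_forest (G F : rel V) :=
  [/\ symmetric F, (forall x y, F x y -> G x y), acyclic F
    & forall x y, connect F x y = connect G x y].

Definition forest_path_contains (F : rel V) (x y a b : V) :=
  exists p : seq V, [/\ path F x p, last x p = y, uniq (x :: p) & uses_edge x p a b].

Definition replacement_edge (H F : rel V) (a b x y : V) :=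
  [/\ H x y, ~~ F x y, connect F x y & forest_path_contains F x y a b].

Definition rep (H F : rel V) (a b : V) : nat :=
  #|[set E : {set V} | `[< exists x y, E = [set x; y] /\ replacement_edge H F a b x y >]]|.

Definition two_edge_connected (H : rel V) (u v : V) :=
  exists p q : seq V,
    [/\ path H u p, last u p = v & uniq (u :: p)] /\
    [/\ path H u q, last u q = v & uniq (u :: q)] /\
    (forall a b, ~~ (uses_edge u p a b && uses_edge u q a b)).

Definition add_edge (G : rel V) (s t : V) : rel V :=
  fun x y => [|| G x y, (x == s) && (y == t) | (x == t) && (y == s)].

Definition forest_update (T : rel V) (s t : V) : rel V :=
  if connect T s t then T else add_edge T s t.

End Graphs.

From mathcomp Require Import all_boot.
From mathcomp Require Import boolp zify.
Set Implicit Arguments. Unset Strict Implicit. Unset Printing Implicit Defensive.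

(* For a forest edge uv, u and v are 2-edge-connected in H iff v is still reachable
   from u in H - uv, iff some edge of H leaves the component of u in T - uv, i.e.
   iff uv has a replacement edge.  If s and t lie in the same tree, T remains a
   spanning forest of G + st, whose replacement edges for uv are those of G plus
   possibly st; the equivalence then reduces to counting.  Otherwise st is a bridge
   of G + st, so it creates no 2-edge-connectivity, and both sides fail: a
   replacement edge in (G + st, T + st) would make u, v 2-edge-connected in G. *)

Section ReplacementEdges.
Variable V : finType.
Implicit Types (R H F T : rel V) (x y z u v a b s t : V) (p : seq V).

Definition remove_edge R u v : rel V :=
  fun x y => R x y && ~~ ((x == u) && (y == v) || (x == v) && (y == u)).

Lemma remove_edge_sub R u v x y : remove_edge R u v x y -> R x y.
Proof. by case/andP. Qed.

Lemma remove_edge_sym R u v : symmetric R -> symmetric (remove_edge R u v).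
Proof. by move=> Rs x y; rewrite /remove_edge Rs orbC ![_ && (y == _)]andbC. Qed.

Lemma remove_edgeC R u v : remove_edge R u v =2 remove_edge R v u.
Proof. by move=> x y; rewrite /remove_edge orbC. Qed.

Lemma add_edge_sym R s t : symmetric R -> symmetric (add_edge R s t).
Proof.
by move=> Rsym x y; rewrite /add_edge Rsym ![(y == _) && _]andbC (orbC ((x == t) && _)).
Qed.

Lemma add_edge_sub R s t : subrel R (add_edge R s t).
Proof. by move=> x y Rxy; rewrite /add_edge Rxy. Qed.

Lemma add_edge_subrel R R' s t : subrel R R' -> subrel (add_edge R s t) (add_edge R' s t).
Proof. by move=> RR' x y /or3P[/RR' | |]; rewrite /add_edge => ->; rewrite ?orbT. Qed.

Lemma uses_edge_cons x z p a b : uses_edge x (z :: p) a b =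
  [|| (x == a) && (z == b), (x == b) && (z == a) | uses_edge z p a b].
Proof.
rewrite /uses_edge /= !in_cons !xpair_eqE ![a == _]eq_sym ![b == _]eq_sym.
by rewrite -!orbA; congr (_ || _); rewrite orbCA.
Qed.

Lemma uses_edge_sym x p a b : uses_edge x p a b = uses_edge x p b a.
Proof. by rewrite /uses_edge orbC. Qed.

Lemma uses_edge_mem x p a b : uses_edge x p a b -> a \in x :: p.
Proof.
elim: p x => // z p IHp x; rewrite uses_edge_cons.
case/or3P=> [/andP[/eqP-> _] | /andP[_ /eqP->] | /IHp];
  by rewrite !inE ?eqxx ?orbT // => ->; rewrite orbT.
Qed.

Lemma path_remove_edge R u v x p :
  path (remove_edge R u v) x p = path R x p && ~~ uses_edge x p u v.
Proof.
elim: p x => //= z p IHp x; rewrite IHp uses_edge_cons /remove_edge !negb_or.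
by case: (R x z) (path R z p) => [] []; rewrite /= ?andbA ?andbF.
Qed.

Lemma connect_exit R (P : pred V) x y :
  connect R x y -> P x -> ~~ P y -> exists a b, [/\ R a b, P a & ~~ P b].
Proof.
move=> /connectP[p + ->]; elim: p x => [|z p IHp] x /=; first by move=> _ ->.
case/andP=> Rxz pz Px; case Pz: (P z); first exact: IHp.
by exists x, z; rewrite Pz.
Qed.

Lemma connect_add_edge R s t x y : connect (add_edge R s t) x y ->
  [|| connect R x y, connect R x s && connect R t y | connect R x t && connect R s y].
Proof.
set P := [pred w | [|| connect R x w, connect R x s && connect R t w
                     | connect R x t && connect R s w]].
move=> cxy; change (P y); apply/idPn => nPy.
have Px : P x by rewrite /= connect0.
have [a [b [Rab Pa /negP]]] := connect_exit cxy Px nPy; apply.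
case/or3P: Rab => [Rab | /andP[/eqP-> /eqP->] | /andP[/eqP-> /eqP->]] in Pa *.
- have Rstep w : connect R w a -> connect R w b.
    by move/connect_trans; apply; apply: connect1.
  by rewrite /=; case/or3P: Pa => [/Rstep | /andP[-> /Rstep] | /andP[-> /Rstep]] ->;
    rewrite ?orbT.
- by rewrite /=; case/or3P: Pa => [-> | /andP[->] | /andP[-> _]]; rewrite ?connect0 ?orbT.
- by rewrite /=; case/or3P: Pa => [-> | /andP[-> _] | /andP[->]]; rewrite ?connect0 ?orbT.
Qed.

Lemma connect_remove_edge_split R u v x p :
  uniq (x :: p) -> path R x p -> uses_edge x p u v ->
  connect (remove_edge R u v) x u && connect (remove_edge R u v) v (last x p) ||
  connect (remove_edge R u v) x v && connect (remove_edge R u v) u (last x p).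
Proof.
elim: p x => // z p IHp x /andP[xNzp uniq_zp] /= /andP[Rxz Rzp].
have tail_free w w' : x = w -> connect (remove_edge R w w') z (last z p).
  move=> xw; apply/connectP; exists p; rewrite // path_remove_edge Rzp /=.
  by apply/negP => /uses_edge_mem; rewrite -xw (negbTE xNzp).
case: (boolP ((x == u) && (z == v) || (x == v) && (z == u))).
  case/orP=> [/andP[/eqP xu /eqP zv] | /andP[/eqP xv /eqP zu]] _ /=.
    by rewrite -zv xu connect0 tail_free.
  by rewrite xv connect0 !(eq_connect (remove_edgeC R u v)) -zu tail_free ?orbT.
move=> xz_ne_uv; rewrite uses_edge_cons orbA (negbTE xz_ne_uv) /=.
have R'xz : remove_edge R u v x z by rewrite /remove_edge Rxz xz_ne_uv.
move=> /(IHp z uniq_zp Rzp).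
by case/orP=> /andP[zu lv]; rewrite (connect_trans (connect1 R'xz) zu) lv ?orbT.
Qed.

Lemma two_edge_connected_edgeE H u v : u != v -> H u v ->
  two_edge_connected H u v <-> connect (remove_edge H u v) u v.
Proof.
move=> neq_uv Huv; split.
  case=> p [q [[Hp lp _] [[Hq lq _] disj]]]; apply/connectP.
  have /nandP[np | nq] := disj u v.
    by exists p; rewrite // path_remove_edge Hp np.
  by exists q; rewrite // path_remove_edge Hq nq.
case/connectP=> p Hp lp; case/shortenP: Hp lp => q + uniq_q _ lq.
rewrite path_remove_edge => /andP[Hq nq].
exists [:: v], q; split; last split => // a b.
  by rewrite /= Huv inE neq_uv.
apply/andP => -[]; rewrite uses_edge_cons orbF => /orP[] /andP[/eqP<- /eqP<-].
  exact/negP.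
by rewrite uses_edge_sym; apply/negP.
Qed.

Lemma acyclic_remove_edge T u v : symmetric T -> acyclic T -> T u v -> u != v ->
  ~~ connect (remove_edge T u v) u v.
Proof.
move=> Tsym Tacyc Tuv neq_uv; apply/negP => /connectP[p Tp lp].
case/shortenP: Tp lp => q + uniq_q _ lq; rewrite path_remove_edge => /andP[Tq nq].
case: q => [|w [|w2 q]] in Tq nq uniq_q lq *.
- by rewrite lq eqxx in neq_uv.
- by rewrite /= in lq; rewrite -lq uses_edge_cons !eqxx in nq.
- apply: (negP (Tacyc (u :: w :: w2 :: q) isT)).
  rewrite /= in lq; rewrite /ucycleb uniq_q andbT /= rcons_path -lq (Tsym v) Tuv andbT.
  by move: Tq; rewrite /= andbA.
Qed.

Lemma forest_path_contains_cut T u v x y :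
  connect T x y -> connect (remove_edge T u v) u x -> ~~ connect (remove_edge T u v) u y ->
  forest_path_contains T x y u v.
Proof.
move=> /connectP[p Tp ->] ux; case/shortenP: Tp => q Tq uniq_q _ nuq.
exists q; split => //; apply: contraNT nuq => nq; apply: connect_trans ux _.
by apply/connectP; exists q; rewrite ?path_remove_edge ?Tq.
Qed.

Lemma rep_gt0 H F a b : 0 < rep H F a b <-> exists x y, replacement_edge H F a b x y.
Proof.
rewrite /rep card_gt0; split => [/set0Pn[E] | [x [y rxy]]].
  by rewrite inE => /asboolP[x [y [_ rxy]]]; exists x, y.
by apply/set0Pn; exists [set x; y]; rewrite inE; apply/asboolP; exists x, y.
Qed.

Lemma rep_add_edge H F a b s t : rep (add_edge H s t) F a b <= (rep H F a b).+1.
Proof.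
rewrite /rep -add1n.
set A := [set E | `[< exists x y, E = [set x; y] /\ replacement_edge H F a b x y >]].
apply: leq_trans (_ : #|[set s; t] |: A| <= _); last by rewrite cardsU1 leq_add2r leq_b1.
apply/subset_leq_card/subsetP => E; rewrite !inE => /asboolP[x [y [-> [Hxy nFxy cxy pxy]]]].
case/or3P: Hxy => [Hxy | /andP[/eqP-> /eqP->] | /andP[/eqP-> /eqP->]].
- by apply/orP; right; apply/asboolP; exists x, y.
- by rewrite eqxx.
- by rewrite setUC eqxx.
Qed.

Lemma replacement_edge_connect H F u v x y :
  symmetric H -> subrel F H -> symmetric F -> F u v ->
  replacement_edge H F u v x y -> connect (remove_edge H u v) u v.
Proof.
move=> Hsym FH Fsym Fuv [Hxy nFxy _ [p [Fp lp uniq_p uses_uv]]].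
set H' := remove_edge H u v.
have H'sym : connect_sym H' := sym_connect_sym (remove_edge_sym u v Hsym).
have FH' : subrel (connect (remove_edge F u v)) (connect H').
  by apply: connect_sub => a b /andP[/FH Hab nab]; rewrite connect1 // /H' /remove_edge Hab.
have H'xy : H' x y.
  rewrite /H' /remove_edge Hxy; apply: contra nFxy.
  by case/orP=> /andP[/eqP-> /eqP->]; rewrite // Fsym.
case/orP: (connect_remove_edge_split uniq_p Fp uses_uv); rewrite lp => /andP[/FH' c1 /FH' c2].
- rewrite H'sym in c1; rewrite H'sym in c2.
  exact: connect_trans c1 (connect_trans (connect1 H'xy) c2).
- apply: connect_trans c2 (connect_trans (connect1 _) c1).
  by rewrite /H' remove_edge_sym.
Qed.

Lemma connect_rep_gt0 H F u v :
  subrel H (connect F) -> ~~ connect (remove_edge F u v) u v ->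
  connect (remove_edge H u v) u v -> 0 < rep H F u v.
Proof.
move=> HF nuv cuv.
have [a [b [/andP[Hab nab] ua nub]]] :=
  connect_exit (P := connect (remove_edge F u v) u) cuv (connect0 _ _) nuv.
apply/rep_gt0; exists a, b; split; rewrite ?HF //.
  by apply: contra nub => Fab; apply: connect_trans ua (connect1 _); rewrite /remove_edge Fab.
by apply: forest_path_contains_cut; rewrite ?HF.
Qed.

Lemma connect_remove_edge_add_bridge H s t u v :
  symmetric H -> H u v -> ~~ connect H s t ->
  connect (remove_edge (add_edge H s t) u v) u v -> connect (remove_edge H u v) u v.
Proof.
move=> Hsym Huv nst c; set H' := remove_edge H u v.
have sub : subrel (connect H') (connect H).
  by apply: connect_sub => a b /remove_edge_sub/connect1.
have Hc := sym_connect_sym Hsym.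
have : connect (add_edge H' s t) u v.
  apply: connect_sub c => a b /andP[Hab nab]; apply: connect1.
  by rewrite /add_edge /H' /remove_edge nab andbT.
case/connect_add_edge/or3P => [// | /andP[us tv] | /andP[ut sv]]; case/negP: nst.
- apply: (connect_trans (y := u)); first by rewrite Hc sub.
  by apply: connect_trans (connect1 Huv) _; rewrite Hc sub.
- apply: connect_trans (sub _ _ sv) (connect_trans (connect1 _) (sub _ _ ut)).
  by rewrite Hsym.
Qed.

Lemma spanning_forest_add_edge H F s t :
  spanning_forest H F -> connect F s t -> spanning_forest (add_edge H s t) F.
Proof.
move=> [Fsym FH Facyc FHc] Fst; split=> // [x y /FH/add_edge_sub // | x y].
apply/idP/idP; apply: connect_sub => a b.
  by move/FH/add_edge_sub/connect1.
case/or3P=> [| /andP[/eqP-> /eqP->] | /andP[/eqP-> /eqP->]] //.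
  by rewrite FHc; apply: connect1.
by rewrite (sym_connect_sym Fsym).
Qed.

Lemma rep_gt0_spanning_forest H F u v :
  symmetric H -> spanning_forest H F -> F u v -> u != v ->
  (0 < rep H F u v) = connect (remove_edge H u v) u v.
Proof.
move=> Hsym [Fsym FH Facyc FHc] Fuv neq_uv; apply/idP/idP.
  by case/rep_gt0=> x [y]; apply: replacement_edge_connect.
apply: connect_rep_gt0 (acyclic_remove_edge Fsym Facyc Fuv neq_uv).
by move=> x y /connect1; rewrite FHc.
Qed.

End ReplacementEdges.

Theorem lemma15 (V : finType) (G T : rel V) (s t : V) :
  simple_graph G -> spanning_forest G T ->
  s != t -> ~~ G s t ->
  forall u v : V, T u v ->
  ((~ two_edge_connected G u v /\ two_edge_connected (add_edge G s t) u v)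
   <-> (rep G T u v = 0 /\ rep (add_edge G s t) (forest_update T s t) u v = 1)).
Proof.
move=> [Gsym Girr] TG _ _ u v Tuv; have [Tsym TsubG _ TGc] := TG.
set G' := add_edge G s t; have G'sym : symmetric G' := add_edge_sym s t Gsym.
have Guv : G u v := TsubG u v Tuv.
have G'uv : G' u v := add_edge_sub s t Guv.
have neq_uv : u != v by apply: contraTneq Guv => ->; rewrite Girr.
have repG := rep_gt0_spanning_forest Gsym TG Tuv neq_uv.
rewrite !two_edge_connected_edgeE // -repG /forest_update.
case: ifP => [Tst | /negbT nTst].
  rewrite -(rep_gt0_spanning_forest G'sym (spanning_forest_add_edge TG Tst) Tuv neq_uv).
  by have := rep_add_edge G T u v s t; rewrite -/G'; lia.
have nGst : ~~ connect G s t by rewrite -TGc.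
have bridge := connect_remove_edge_add_bridge Gsym Guv nGst.
split=> [[+ /bridge] | [repG0 repG'1]]; first by rewrite -repG.
have /rep_gt0[x [y]] : 0 < rep G' (add_edge T s t) u v by rewrite repG'1.
move/(replacement_edge_connect G'sym (add_edge_subrel TsubG) (add_edge_sym s t Tsym)).
by move/(_ (add_edge_sub s t Tuv))/bridge; rewrite -repG repG0.
Qed.
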